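(* Let $p$ be a prime and $G=\mathbb{Z}\times\mathbb{Z}_p=\langle z\rangle\times\langle a\rangle$. If $\mathcal{S}$ is a Schur ring over $G$ such that $\langle a^iz\rangle$ is an $\mathcal{S}$-subgroup for some integer $i$, then $\mathcal{S}$ is an automorphic Schur ring.
   Context: $F$ is a field of characteristic $0$; $\mathbb{Z}=\langle z\rangle$ infinite cyclic, $\mathbb{Z}_p=\langle a\rangle$ cyclic of order $p$, written multiplicatively. For finite $C\subseteq G$, $\overline{C}=\sum_{g\in C}g$ and $C^*=\{g^{-1}:g\in C\}$. A Schur ring over $G$ is a subspace $\mathcal{S}=\mathrm{Span}_F\{\overline{C}:C\in\mathcal{D}\}$ of $F[G]$, where $\mathcal{D}$ is a partition of $G$ into finite subsets with $\{1\}\in\mathcal{D}$, $C\in\mathcal{D}\Rightarrow C^*\in\mathcal{D}$, and each $\overline{C}\,\overline{D}$ a finite $F$-linear combination of the $\overline{E}$, $E\in\mathcal{D}$. An $\mathcal{S}$-subgroup is a subgroup that is a union of members of $\mathcal{D}$. $\mathcal{S}$ is automorphic if $\mathcal{S}=F[G]^{\mathcal{H}}$ (elements fixed by $\mathcal{H}$; classes are the $\mathcal{H}$-orbits) for some finite $\mathcal{H}\le\operatorname{Aut}(G)$. *)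

From HB Require Import structures.
From mathcomp Require Import all_boot all_order all_algebra.
Set Implicit Arguments. Unset Strict Implicit. Unset Printing Implicit Defensive.
Import Order.TTheory GRing.Theory Num.Theory.
Local Open Scope ring_scope.

(* G = Z x Z_p, written ADDITIVELY: (m, j) stands for z^m a^j.
   So z = (1,0), a = (0,1), a^i z = (1, i), group product = +, inverse = -,
   identity = 0. *)
Definition grp (p : nat) := (int * 'Z_p)%type.

Section SchurDefs.
Variables (F : fieldType) (p : nat).
Local Notation G := (grp p).

Definition enumerates (s : seq G) (P : pred G) : Prop :=
  uniq s /\ forall g, (g \in s) = P g.

(* Elements of F[G] are finitely supported functions G -> F. *)
Definition fin_supp (f : G -> F) : Prop :=
  exists s : seq G, forall g, f g != 0 -> g \in s.

(* The partition D is given by an equivalence relation R; the class of x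
   is [pred y | R x y].  Class sum of the class of x, as an element of F[G]. *)
Definition class_sum (R : rel G) (x : G) : G -> F := fun g => (R x g)%:R.

Definition schur_span (R : rel G) (f : G -> F) : Prop :=
  exists (xs : seq G) (cs : seq F),
    f = fun g => \sum_(k < size xs) cs`_k * class_sum R xs`_k g.

(* The product (sum of s)(sum of t) in F[G], for s, t enumerations of
   finite subsets: coefficient of g is #{(c,d) in s x t | c d = g}. *)
Definition prod_sum (s t : seq G) : G -> F :=
  fun g => \sum_(c <- s) \sum_(d <- t) (c + d == g)%:R.

Record schur_ring (R : rel G) : Prop := {
  sr_refl : reflexive R;
  sr_sym : symmetric R;
  sr_trans : transitive R;
  sr_finite : forall x, exists s, enumerates s (R x);
  sr_one : forall g, R 0 g = (g == 0);
  sr_inv : forall x y, R x y -> R (- x) (- y);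
  sr_prod : forall x y s t, enumerates s (R x) -> enumerates t (R y) ->
              schur_span R (prod_sum s t)
}.

Definition cyc (w : G) (g : G) : Prop := exists n : int, g = w *~ n.

Definition S_subgroup (R : rel G) (H : G -> Prop) : Prop :=
  forall x y, R x y -> H x -> H y.

Definition group_aut (h : G -> G) : Prop :=
  (forall x y, h (x + y) = h x + h y) /\ bijective h.

(* S is automorphic: S = F[G]^H for a finite subgroup H = {H_0,...,H_(n-1)}
   of Aut(G); F[G]^H = finitely supported f fixed by the action
   (h.f)(g) = f(h^-1 g), i.e. f o h = f for all h in H. *)
Definition automorphic (R : rel G) : Prop :=
  exists (n : nat) (H : 'I_n -> G -> G),
    [/\ forall k, group_aut (H k),
        exists k, H k =1 id,
        forall k l, exists m, H m =1 H k \o H l,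
        forall k, exists m, cancel (H k) (H m) &
        forall f : G -> F, schur_span R f <->
          (fin_supp f /\ forall k g, f (H k g) = f g)].

End SchurDefs.

From HB Require Import structures.
From mathcomp Require Import all_boot all_order all_algebra.
From mathcomp Require Import zify.
From Stdlib Require Import FunctionalExtensionality.
Set Implicit Arguments. Unset Strict Implicit. Unset Printing Implicit Defensive.
Import Order.TTheory GRing.Theory Num.Theory.
Local Open Scope ring_scope.

(* Counting the q-tuples of a class C_x that sum to a given element, modulo a
   prime q, shows that the class of x *+ k lies in k times C_x whenever multiplication
   by k is injective (a multiplier theorem in the style of Schur).  Write elements as
   n w + j a with w = a^i z.  Inside the S-subgroup <w> = Z this gives C_(n w) within
   {n w, -n w}; with k = 1 mod p it shows that classes of elements of <a> stay in <a>,
   and with k coprime to p that they are orbits of a group of units of Z_p.  Adding the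
   class of w or -w moves between n w + j a and (n+1) w + j a, so whether
   n w + j a ~ (+-n) w + j' a does not depend on n > 0; the multiplier theorem makes
   this relation compatible with multiplying j and j' by units.  Hence every class is
   an orbit of the finite group of automorphisms n w + j a |-> (+-n) w + u j a for
   which w + a ~ +-w + u a. *)

Lemma pcharf0_natr_inj (F : fieldType) : [pchar F] =i pred0 ->
  injective (fun n : nat => n%:R : F).
Proof.
move=> /pcharf0P F0 m n; wlog le_mn : m n / (m <= n)%N => [W E|E].
  by case/orP: (leq_total m n) => mn; [apply: W mn E | apply/esym/(W _ _ mn)/esym].
by apply/eqP; rewrite eqn_leq le_mn /= -subn_eq0 -F0 natrB // E subrr.
Qed.

Lemma sum_nat_count (T : Type) (s : seq T) (P : pred T) :
  (\sum_(x <- s) (P x : nat) = count P s)%N.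
Proof. by elim: s => [|x s IH]; rewrite ?big_nil ?big_cons ?IH. Qed.

Section TupleCount.
Variable V : zmodType.

Fixpoint tuple_count (s : seq V) (k : nat) (g : V) : nat :=
  if k is k'.+1 then (\sum_(c <- s) tuple_count s k' (g - c))%N
  else (g == 0 : nat).

Lemma tuple_count_cons c s k g : tuple_count (c :: s) k g =
  (\sum_(i < k.+1) 'C(k, i) * tuple_count s (k - i) (g - c *+ i))%N.
Proof.
elim: k g => [|k IH] g; first by rewrite big_ord1 /= mul1n mulr0n subr0.
have tcS m h : (\sum_(d <- s) tuple_count s m (h - d))%N = tuple_count s m.+1 h.
  by [].
rewrite /= big_cons IH.
under eq_bigr => d _ do rewrite IH.
rewrite exchange_big /=.
under [X in (_ + X)%N]eq_bigr => i _.
  rewrite -big_distrr /=.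
  under eq_bigr => d _ do rewrite -addrA [(- d + _)%R]addrC addrA.
  rewrite tcS; over.
rewrite [X in (_ + X)%N]big_ord_recl [RHS]big_ord_recl /=.
rewrite !bin0 !subn0 !mulr0n !subr0 !mul1n tcS /bump.
under [in RHS]eq_bigr => i _ do rewrite add1n binS mulnDl subSS.
under [X in (_ + (_ + X))%N = _]eq_bigr => i _ do rewrite add1n tcS subnSK //.
rewrite big_split /= [X in _ = (_ + (X + _))%N]big_ord_recr /=.
rewrite bin_small // mul0n addn0 addnCA; congr (_ + _)%N; rewrite addnC.
by congr (_ + _)%N; apply: eq_bigr => i _; rewrite mulrS opprD addrA.
Qed.

(* 'C(q, i) vanishes modulo q for 0 < i < q. *)
Lemma tuple_count_prime s q g : prime q ->
  tuple_count s q g = count (fun c => c *+ q == g) s %[mod q].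
Proof.
move=> q_pr; elim: s => [|c s IH]; first by case: q q_pr => // q; rewrite /= big_nil.
rewrite tuple_count_cons /=; case: q q_pr IH => // q q_pr IH.
rewrite big_ord_recr big_ord_recl /= bin0 mul1n mulr0n subr0 subnn binn mul1n.
have /dvdnP[m ->] : (q.+1 %| \sum_(i < q) 'C(q.+1, bump 0 i) *
      tuple_count s (q.+1 - bump 0 i) (g - c *+ bump 0 i))%N.
  apply: dvdn_sum => i _; apply/dvdn_mulr/prime_dvd_bin => //.
  by rewrite /bump /= add1n ltnS.
by rewrite addnAC addnC modnMDl -modnDml IH modnDml /= subr_eq0 eq_sym addnC.
Qed.

End TupleCount.

Lemma grp_mulrn_inj p k : (1 < p)%N -> (0 < k)%N -> coprime k p ->
  injective (fun x : grp p => x *+ k).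
Proof.
move=> p_gt1 k_gt0 kp [a1 a2] [b1 b2] /= /(congr1 (fun x => (x.1, x.2))) /=.
rewrite !raddfMn /= => -[/eqP + abk2]; rewrite eqr_pMn2r // => /eqP ->.
congr pair; apply: (mulIr (x := k%:R)); first by rewrite unitZpE // coprime_sym.
by rewrite !mulr_natr.
Qed.

Definition signz (b : bool) (n : int) : int := if b then - n else n.

Lemma signz0 b : signz b 0 = 0. Proof. by case: b. Qed.

Section SchurRing.
Variables (F : fieldType) (p : nat) (R : rel (grp p)).
Hypotheses (char0 : [pchar F] =i pred0) (SR : schur_ring F R).
Local Notation G := (grp p).

Lemma R_refl x : R x x. Proof. exact: (sr_refl SR). Qed.
Lemma R_sym x y : R x y = R y x. Proof. exact: (sr_sym SR). Qed.
Lemma R_trans x y z : R x y -> R y z -> R x z. Proof. exact: (sr_trans SR). Qed.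
Lemma R_opp x y : R x y -> R (- x) (- y). Proof. exact: (sr_inv SR). Qed.
Lemma R0 y : R 0 y = (y == 0). Proof. exact: (sr_one SR). Qed.

Lemma R_trans_eq x y z : R x y -> R z x = R z y.
Proof.
by move=> xy; apply/idP/idP => [/R_trans|zy]; [apply | apply: R_trans zy _; rewrite R_sym].
Qed.

Definition span_sum (l : seq (G * F)) (g : G) : F :=
  \sum_(xc <- l) xc.2 * class_sum F R xc.1 g.

Lemma schur_span_sum (f : G -> F) : schur_span R f -> exists l, f = span_sum l.
Proof.
case=> xs [cs ->]; exists [seq (xs`_k, cs`_k) | k <- iota 0 (size xs)].
apply: functional_extensionality => g.
by rewrite /span_sum big_map -val_enum_ord big_map /= big_enum.
Qed.

Lemma span_sum_schur l : schur_span R (span_sum l).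
Proof.
exists (map fst l), (map snd l); apply: functional_extensionality => g.
rewrite /span_sum (big_nth (0, 0)) big_mkord size_map; apply: eq_bigr => k _.
by rewrite !(nth_map (0, 0)).
Qed.

Lemma schur_span_const (f : G -> F) x y : schur_span R f -> R x y -> f x = f y.
Proof.
case/schur_span_sum=> l -> xy; apply: eq_bigr => xc _.
by rewrite /class_sum (R_trans_eq _ xy).
Qed.

Lemma schur_span_fin_supp (f : G -> F) : schur_span R f -> fin_supp f.
Proof.
case/schur_span_sum=> l ->; elim: l => [|xc l [s Hs]].
  by exists [::] => g; rewrite /span_sum big_nil eqxx.
have [t [_ Mt]] := sr_finite SR xc.1.
exists (t ++ s) => g; rewrite /span_sum big_cons mem_cat Mt.
case: (boolP (R xc.1 g)) => //= xg.
by rewrite /class_sum (negbTE xg) mulr0 add0r => /Hs.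
Qed.

(* Divide by the class sizes, which are invertible in characteristic 0. *)
Lemma class_fun_schur_span (f : G -> F) :
  fin_supp f -> (forall x y, R x y -> f x = f y) -> schur_span R f.
Proof.
case=> s fs f_const; set S := undup s.
pose size_in x : F := (count (R x) S)%:R.
suff -> : f = span_sum [seq (x, f x / size_in x) | x <- S] by exact: span_sum_schur.
apply: functional_extensionality => g; rewrite /span_sum big_map /=.
have -> : \sum_(x <- S) f x / size_in x * class_sum F R x g =
          \sum_(x <- S) f g / size_in g * (R g x)%:R.
  apply: eq_bigr => x _; rewrite /class_sum R_sym.
  case: (boolP (R g x)) => gx; last by rewrite !mulr0.
  rewrite -(f_const _ _ gx) /size_in; congr (_ / _%:R * _).
  by apply: eq_count => z; rewrite [R x z]R_sym -(R_trans_eq _ gx) R_sym.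
rewrite -big_distrr /= -natr_sum sum_nat_count.
have [->|fg0] := eqVneq (f g) 0; first by rewrite !mul0r.
rewrite divfK // ((pcharf0P F).1 char0) -lt0n -has_count.
by apply/hasP; exists g; rewrite ?mem_undup ?fs ?R_refl.
Qed.

Lemma prod_sum_count x t s g : enumerates t (R x) ->
  prod_sum F t s g = (count (fun d => R x (g - d)) s)%:R.
Proof.
case=> Ut Mt; rewrite /prod_sum exchange_big /= -sum_nat_count natr_sum.
apply: eq_bigr => d _; rewrite -natr_sum sum_nat_count -Mt -count_uniq_mem //.
by congr _%:R; apply: eq_count => c /=; apply/eqP/eqP => [<-|->]; rewrite ?addrK ?subrK.
Qed.

Lemma count_class_sub_const x y t z z' : enumerates t (R y) -> R z z' ->
  count (fun d => R x (z - d)) t = count (fun d => R x (z' - d)) t.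
Proof.
move=> Ht zz'; have [s Hs] := sr_finite SR x.
apply: (pcharf0_natr_inj char0); rewrite -!(prod_sum_count _ _ Hs).
exact: schur_span_const (sr_prod SR Hs Ht) zz'.
Qed.

Lemma classD_closed x y z z' : R z z' ->
  (exists2 d, R y d & R x (z - d)) -> exists2 d, R y d & R x (z' - d).
Proof.
move=> zz' [d yd xzd]; have [t [Ut Mt]] := sr_finite SR y.
have : has (fun d => R x (z - d)) t by apply/hasP; exists d; rewrite ?Mt.
rewrite has_count (count_class_sub_const x (conj Ut Mt) zz') -has_count.
by case/hasP=> d' d't; exists d'; rewrite -?Mt.
Qed.

Lemma schur_span_big (I : Type) (r : seq I) (c : I -> F) (h : I -> G -> F) :
  (forall i, schur_span R (h i)) ->
  schur_span R (fun g => \sum_(i <- r) c i * h i g).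
Proof.
move=> h_span; elim: r => [|i r /schur_span_sum[l IH]].
  have -> : (fun g => \sum_(i <- [::]) c i * h i g) = span_sum [::].
    by apply: functional_extensionality => g; rewrite /span_sum !big_nil.
  exact: span_sum_schur.
have [li hi] := schur_span_sum (h_span i).
suff -> : (fun g => \sum_(j <- i :: r) c j * h j g) =
          span_sum ([seq (xc.1, c i * xc.2) | xc <- li] ++ l) by exact: span_sum_schur.
apply: functional_extensionality => g.
rewrite big_cons /span_sum big_cat big_map hi -/(span_sum l g) -(congr1 (@^~ g) IH).
by rewrite big_distrr; congr (_ + _); apply: eq_bigr => xc _ /=; rewrite mulrA.
Qed.

Lemma schur_span_mul_class (f : G -> F) x s : enumerates s (R x) ->
  schur_span R f -> schur_span R (fun g => \sum_(c <- s) f (g - c)).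
Proof.
move=> Hs /schur_span_sum[l ->].
pose h (xc : G * F) g := \sum_(c <- s) class_sum F R xc.1 (g - c).
have -> : (fun g => \sum_(c <- s) span_sum l (g - c)) =
          (fun g => \sum_(xc <- l) xc.2 * h xc g).
  apply: functional_extensionality => g; rewrite exchange_big /=.
  by apply: eq_bigr => xc _; rewrite big_distrr.
apply: schur_span_big => xc; have [t Ht] := sr_finite SR xc.1.
have -> : h xc = prod_sum F t s.
  apply: functional_extensionality => g; rewrite (prod_sum_count _ _ Ht).
  by rewrite -sum_nat_count natr_sum.
exact: (sr_prod SR Ht Hs).
Qed.

Lemma tuple_count_schur_span x s k : enumerates s (R x) ->
  schur_span R (fun g => (tuple_count s k g)%:R : F).
Proof.
move=> Hs; elim: k => [|k IH].
  have -> : (fun g => (tuple_count s 0 g)%:R : F) = span_sum [:: (0, 1)].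
    apply: functional_extensionality => g.
    by rewrite /span_sum big_seq1 /class_sum R0 mul1r.
  exact: span_sum_schur.
have -> : (fun g => (tuple_count s k.+1 g)%:R : F) =
          (fun g => \sum_(c <- s) (tuple_count s k (g - c))%:R).
  by apply: functional_extensionality => g; rewrite /= natr_sum.
exact: schur_span_mul_class Hs IH.
Qed.

(* Count the q-tuples of the class of x summing to x *+ q and to y, modulo q. *)
Lemma class_mulrn_prime x y q : prime q ->
  (forall c, R x c -> c *+ q = x *+ q -> c = x) ->
  R (x *+ q) y -> exists2 c, R x c & y = c *+ q.
Proof.
move=> q_pr inj xqy; have [s [Us Ms]] := sr_finite SR x.
have Es : tuple_count s q (x *+ q) = tuple_count s q y.
  apply: (pcharf0_natr_inj char0).
  exact: schur_span_const (tuple_count_schur_span q (conj Us Ms)) xqy.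
have diag1 : count (fun c => c *+ q == x *+ q) s = 1%N.
  rewrite (@eq_in_count _ _ (pred1 x)) ?count_uniq_mem ?Ms ?R_refl //.
  by move=> c; rewrite Ms => xc /=; apply/eqP/eqP => [/(inj _ xc)|->].
have := @tuple_count_prime _ s q y q_pr; rewrite -Es tuple_count_prime // diag1.
have [->|] := posnP (count (fun c => c *+ q == y) s).
  by rewrite mod0n modn_small // prime_gt1.
by rewrite -has_count => /hasP[c cs /eqP <-] _; exists c; rewrite -?Ms.
Qed.

Lemma class_mulrn (P : {pred G}) k x y : (0 < k)%N ->
  {in P &, injective (fun c => c *+ k)} ->
  (forall a b, R a b -> a \in P -> b \in P) ->
  (forall a m, a \in P -> a *+ m \in P) ->
  x \in P -> R (x *+ k) y -> exists2 c, R x c & y = c *+ k.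
Proof.
elim/ltn_ind: k x y => k IHk x y k_gt0 injk RP MP Px.
have [k_le1|k_gt1] := leqP k 1.
  have -> : k = 1%N by apply/eqP; rewrite eqn_leq k_le1.
  by rewrite mulr1n => xy; exists y; rewrite ?mulr1n.
have [q q_pr /dvdnP[k' kE]] := pdivP k_gt1.
have k'_gt0 : (0 < k')%N by move: k_gt0; rewrite kE muln_gt0 => /andP[].
have k'_lt : (k' < k)%N by rewrite kE ltn_Pmulr ?prime_gt1.
have mulk (a : G) : a *+ k = a *+ k' *+ q by rewrite kE mulrnA.
have injq : {in P &, injective (fun c => c *+ q)}.
  by move=> a b Pa Pb /= abq; apply: injk; rewrite //= !mulk !(mulrnAC _ k') abq.
have injk' : {in P &, injective (fun c => c *+ k')}.
  by move=> a b Pa Pb /= abk; apply: injk; rewrite //= !mulk abk.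
rewrite mulk => xky.
have [c1 xc1 ->] := class_mulrn_prime q_pr
  (fun c xc => injq _ _ (RP _ _ xc (MP _ _ Px)) (MP _ _ Px)) xky.
have [c xc ->] := IHk k' k'_lt x c1 k'_gt0 injk' RP MP Px xc1.
by exists c; rewrite // mulk.
Qed.

Lemma automorphic_of_orbits (T : finType) (K : {pred T}) (act : T -> G -> G) t1 :
  (forall t, t \in K -> group_aut (act t)) ->
  t1 \in K -> act t1 =1 id ->
  (forall t s, t \in K -> s \in K -> exists2 r, r \in K & act r =1 act t \o act s) ->
  (forall t, t \in K -> exists2 r, r \in K & cancel (act t) (act r)) ->
  (forall x y, R x y <-> exists2 t, t \in K & y = act t x) ->
  automorphic F R.
Proof.
move=> autK Kt1 act1 actM actV orbits.
have rankK t : t \in K -> exists k : 'I_#|K|, enum_val k = t.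
  by move=> Kt; exists (enum_rank_in Kt t); rewrite enum_rankK_in.
exists #|K|, (fun k => act (enum_val k)); split.
- by move=> k; apply/autK/enum_valP.
- by have [k kE] := rankK _ Kt1; exists k => x; rewrite kE act1.
- move=> k l; have [r Kr actE] := actM _ _ (enum_valP k) (enum_valP l).
  by have [m mE] := rankK _ Kr; exists m => x; rewrite mE actE.
- move=> k; have [r Kr actK] := actV _ (enum_valP k).
  by have [m mE] := rankK _ Kr; exists m; rewrite mE.
move=> f; split => [f_span|[f_fin f_inv]].
  split=> [|k g]; first exact: schur_span_fin_supp.
  apply/esym/(schur_span_const f_span)/orbits.
  by exists (enum_val k); rewrite ?enum_valP.
apply: class_fun_schur_span => // x _ /orbits[t Kt ->].
by have [k <-] := rankK _ Kt; rewrite f_inv.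
Qed.

Section CyclicSSubgroup.
Variable i0 : 'Z_p.
Hypotheses (p_pr : prime p) (cyc_S_subgroup : S_subgroup R (cyc ((1%:Z, i0) : G))).

(* [pt n j] stands for (a^i0 z)^n a^j, i.e. n w + j a with w = (1, i0). *)
Definition pt (n : int) (j : 'Z_p) : G := (n, i0 *~ n + j).
Definition acoord (x : G) : 'Z_p := x.2 - i0 *~ x.1.

Lemma ptE x : pt x.1 (acoord x) = x.
Proof. by case: x => n j; rewrite /pt /acoord /= addrC subrK. Qed.

Lemma acoord_pt n j : acoord (pt n j) = j.
Proof. by rewrite /acoord /pt /= addrC addKr. Qed.

Lemma pt_inj n j m l : pt n j = pt m l -> n = m /\ j = l.
Proof. by move=> E; split; [apply: (congr1 fst E) | rewrite -(acoord_pt n j) E acoord_pt]. Qed.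

Lemma pt00 : pt 0 0 = 0.
Proof. by rewrite /pt mulr0z addr0. Qed.

Lemma ptD n j m l : pt n j + pt m l = pt (n + m) (j + l).
Proof. by rewrite /pt; congr pair; rewrite /= mulrzDr addrACA. Qed.

Lemma ptN n j : - pt n j = pt (- n) (- j).
Proof. by rewrite /pt; congr pair; rewrite /= opprD mulrNz. Qed.

Lemma ptB n j m l : pt n j - pt m l = pt (n - m) (j - l).
Proof. by rewrite ptN ptD. Qed.

Lemma pt_mulrn n j k : pt n j *+ k = pt (n *+ k) (j *+ k).
Proof. by elim: k => [|k IH]; rewrite ?pt00 // !mulrS IH ptD. Qed.

Lemma acoord_mulrn x k : acoord (x *+ k) = acoord x *+ k.
Proof. by rewrite -{1}(ptE x) pt_mulrn acoord_pt. Qed.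

Lemma cyc_acoord x : cyc ((1%:Z, i0) : G) x <-> acoord x = 0.
Proof.
split=> [[n ->]|x0]; first by rewrite /acoord (raddfMz fst) (raddfMz snd) /= intz subrr.
exists x.1; rewrite -{1}(ptE x) x0 /pt addr0.
by rewrite [RHS]surjective_pairing (raddfMz fst) (raddfMz snd) /= intz.
Qed.

Definition act (bu : bool * 'Z_p) (x : G) : G :=
  pt (signz bu.1 x.1) (bu.2 * acoord x).

Lemma act_pt bu n j : act bu (pt n j) = pt (signz bu.1 n) (bu.2 * j).
Proof. by rewrite /act acoord_pt. Qed.

Lemma actD bu x y : act bu (x + y) = act bu x + act bu y.
Proof.
rewrite -{1}(ptE x) -{1}(ptE y) ptD act_pt /act ptD mulrDr.
by case: bu.1; rewrite /= ?opprD.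
Qed.

Lemma actN bu x : act bu (- x) = - act bu x.
Proof. by rewrite -{1}(ptE x) ptN act_pt /act ptN mulrN; case: bu.1; rewrite /= ?opprK. Qed.

Lemma act_comp bu cv : act (bu.1 (+) cv.1, bu.2 * cv.2) =1 act bu \o act cv.
Proof.
move=> x; rewrite /= -(ptE x) !act_pt mulrA.
by case: bu.1; case: cv.1; rewrite /= ?opprK.
Qed.

Lemma act1 : act (false, 1) =1 id.
Proof. by move=> x; rewrite /act mul1r ptE. Qed.

Lemma actK b u : u \is a GRing.unit -> cancel (act (b, u)) (act (b, u^-1)).
Proof.
by move=> u_unit x; rewrite -[act _ (act _ x)]/((_ \o _) x) -act_comp /= addbb mulVr ?act1.
Qed.

Lemma act_aut b u : u \is a GRing.unit -> group_aut (act (b, u)).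
Proof.
move=> u_unit; split=> [|]; first exact: actD.
exists (act (b, u^-1)); first exact: actK.
by rewrite -{2}(invrK u); apply: actK; rewrite unitrV.
Qed.

Let p_gt1 : (1 < p)%N := prime_gt1 p_pr.

Lemma acoord_class x y : R x y -> acoord x = 0 -> acoord y = 0.
Proof. by move=> xy /cyc_acoord x0; apply/cyc_acoord; apply: cyc_S_subgroup xy x0. Qed.

Lemma class_mulrn_coprime k x y : (0 < k)%N -> coprime k p ->
  R (x *+ k) y -> exists2 c, R x c & y = c *+ k.
Proof.
move=> k_gt0 kp; apply: (class_mulrn (P := predT)) => //.
by move=> a b _ _; apply: grp_mulrn_inj.
Qed.

Lemma class_mulrn_cyc k x y : (0 < k)%N -> acoord x = 0 ->
  R (x *+ k) y -> exists2 c, R x c & y = c *+ k.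
Proof.
move=> k_gt0 x0; apply: (class_mulrn (P := [pred a | acoord a == 0]) k_gt0).
- move=> a b /eqP a0 /eqP b0 /(congr1 fst); rewrite !(raddfMn fst) /= => /eqP.
  by rewrite eqr_pMn2r // => /eqP ab1; rewrite -(ptE a) -(ptE b) a0 b0 ab1.
- by move=> a b ab /eqP /(acoord_class ab) /eqP.
- by move=> a m /eqP a0; rewrite inE acoord_mulrn a0 mul0rn.
- exact/eqP.
Qed.

Lemma class_nw_dvd n m : n != 0 -> R (pt n 0) (pt m 0) -> (`|n| %| `|m|)%N.
Proof.
move=> n0; have -> : pt n 0 = pt (sgz n) 0 *+ `|n|.
  by rewrite pt_mulrn mul0rn -mulr_natr natz -intEsg.
case/class_mulrn_cyc; rewrite ?absz_gt0 ?acoord_pt // => c wc.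
have c0 := acoord_class wc (acoord_pt _ _).
rewrite -(ptE c) c0 pt_mulrn mul0rn => /pt_inj[-> _].
by apply/dvdnP; exists `|c.1|%N; lia.
Qed.

Lemma class_nw n y : R (pt n 0) y -> y = pt n 0 \/ y = pt (- n) 0.
Proof.
move=> ny; have y0 := acoord_class ny (acoord_pt _ _).
have yE : y = pt y.1 0 by rewrite -{1}(ptE y) y0.
rewrite yE in ny *.
have [n0|n0] := eqVneq n 0.
  by move: ny; rewrite n0 pt00 R0 -pt00 => /eqP ->; left.
have [y10|y10] := eqVneq y.1 0.
  by move: ny; rewrite y10 pt00 R_sym R0 -pt00 => /eqP/pt_inj[/eqP]; rewrite (negbTE n0).
have yn : R (pt y.1 0) (pt n 0) by rewrite R_sym.
have abs_y1 : `|y.1|%N = `|n|%N by apply/eqP; rewrite eqn_dvd !class_nw_dvd.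
have [->|->] : y.1 = n \/ y.1 = - n by lia.
  by left.
by right.
Qed.

Lemma Zp_unit_neq0 (u : 'Z_p) : u != 0 -> u \is a GRing.unit.
Proof.
move=> u0; have u_lt : (u < p)%N by rewrite -[X in (_ < X)%N](Zp_cast p_gt1).
rewrite -[u]natr_Zp unitZpE // prime_coprime // gtnNdvd // lt0n.
by apply: contra u0 => /eqP u_0; apply/eqP/val_inj.
Qed.

Lemma Zp_unit_nat (v : 'Z_p) : v \is a GRing.unit ->
  [/\ (0 < v)%N, coprime v p & (v%:R : 'Z_p) = v].
Proof.
move=> v_unit; rewrite coprime_sym -unitZpE // natr_Zp; split=> //.
by rewrite lt0n; apply: contraTneq v_unit => v0; rewrite -[v]natr_Zp v0 unitr0.
Qed.

(* Multiplying by k = 1 mod p fixes [pt 0 j], and k exceeds the first coordinate of y. *)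
Lemma class_torsion j y : R (pt 0 j) y -> y = pt 0 (acoord y).
Proof.
set k := (`|y.1|.+1 * p).+1 => jy.
have k_p : coprime k p.
  by rewrite coprime_sym -coprime_modr /k -addn1 modnMDl modn_small // coprimen1.
have kj : pt 0 j *+ k = pt 0 j.
  by rewrite pt_mulrn mul0rn /k mulrSr mulrnA -mulr_natr pchar_Zp // mulr0 add0r.
rewrite -kj in jy; have [c _ yE] := class_mulrn_coprime (ltn0Sn _) k_p jy.
have y1 : y.1 = c.1 * k%:Z by rewrite yE (raddfMn fst) /= -mulr_natr natz.
have y1_lt : (`|y.1| < k)%N by rewrite /k; nia.
have y1_abs : `|y.1|%N = (`|c.1| * k)%N by rewrite y1 abszM absz_nat.
have /eqP : `|y.1|%N = 0%N.
  by move: y1_lt; rewrite y1_abs; case: `|c.1|%N => // a; rewrite mulSn; lia.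
by rewrite absz_eq0 => /eqP y10; rewrite -{1}(ptE y) y10.
Qed.

Lemma torsion_mulr v j j' : v \is a GRing.unit ->
  R (pt 0 j) (pt 0 j') -> R (pt 0 (v * j)) (pt 0 (v * j')).
Proof.
move=> v_unit; have vV_unit : v^-1 \is a GRing.unit by rewrite unitrV.
have [k_gt0 k_p kE] := Zp_unit_nat vV_unit.
set k := nat_of_ord v^-1 in k_gt0 k_p kE.
have kj : pt 0 (v * j) *+ k = pt 0 j by rewrite pt_mulrn mul0rn -mulr_natr kE mulrC mulKr.
rewrite -kj => /(class_mulrn_coprime k_gt0 k_p)[c jc].
rewrite (class_torsion jc) pt_mulrn mul0rn -mulr_natr kE => /pt_inj[_ ->].
by rewrite mulrCA mulrV // mulr1 -(class_torsion jc).
Qed.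

Lemma torsion_unit u : R (pt 0 1) (pt 0 u) -> u \is a GRing.unit.
Proof.
move=> Ru; apply: Zp_unit_neq0; apply: contraTneq Ru => ->.
by rewrite pt00 R_sym R0 -pt00; apply/eqP => /pt_inj[_ /eqP]; rewrite oner_eq0.
Qed.

Lemma class_layer n j m j' :
  R (pt n j) (pt m j') -> (m = n \/ m = - n) /\ R (pt 0 j) (pt 0 j').
Proof.
move=> /classD_closed H.
have [d jd nd] : exists2 d, R (pt 0 j) d & R (pt n 0) (pt m j' - d).
  by apply: H; exists (pt 0 j); rewrite ?ptB ?subr0 ?subrr R_refl.
have dE := class_torsion jd; rewrite dE ptB subr0 in nd.
have [m_pm j'E] : (m = n \/ m = - n) /\ j' = acoord d.
  by case: (class_nw nd) => /pt_inj[mE /eqP]; rewrite subr_eq0 => /eqP; tauto.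
by rewrite j'E -dE.
Qed.

Lemma class_pm_w e d : e = 1 \/ e = -1 -> R (pt e 0) d ->
  exists2 e', e' = 1 \/ e' = -1 & d = pt e' 0.
Proof. by move=> e_pm /class_nw[->|->]; [exists e | exists (- e)] => //; lia. Qed.

(* (n+1) w + j a lies in C_(n w + j a) + C_w, and C_w is within {w, -w}. *)
Lemma class_shift_down n j j' b : 0 < n ->
  R (pt (n + 1) j) (pt (signz b (n + 1)) j') -> R (pt n j) (pt (signz b n) j').
Proof.
move=> n_gt0 /classD_closed H.
have [d wd nd] : exists2 d, R (pt 1 0) d & R (pt n j) (pt (signz b (n + 1)) j' - d).
  by apply: H; exists (pt 1 0); rewrite ?ptB ?subr0 ?addrK R_refl.
have [e e_pm dE] := class_pm_w (or_introl erefl) wd.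
rewrite dE ptB subr0 in nd; have [m_pm _] := class_layer nd.
by have <- : signz b (n + 1) - e = signz b n by case: b {H nd} m_pm => /=; lia.
Qed.

Lemma class_shift_up n j j' b : 0 < n ->
  R (pt n j) (pt (signz b n) j') -> R (pt (n + 1) j) (pt (signz b (n + 1)) j').
Proof.
move=> n_gt0 /classD_closed H.
have [d wd nd] : exists2 d, R (pt (-1) 0) d & R (pt (n + 1) j) (pt (signz b n) j' - d).
  by apply: H; exists (pt (-1) 0); rewrite ?ptB ?subr0 ?opprK R_refl.
have [e e_pm dE] := class_pm_w (or_intror erefl) wd.
rewrite dE ptB subr0 in nd; have [m_pm _] := class_layer nd.
by have <- : signz b n - e = signz b (n + 1) by case: b {H nd} m_pm => /=; lia.
Qed.

Lemma class_shift n j j' b : 0 < n ->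
  R (pt n j) (pt (signz b n) j') = R (pt 1 j) (pt (signz b 1) j').
Proof.
case: n => [[|k]|] //= _; elim: k => [//|k IH].
have -> : Posz k.+2 = Posz k.+1 + 1 by rewrite -addn1 PoszD.
by rewrite -IH; apply/idP/idP; [apply: class_shift_down | apply: class_shift_up].
Qed.

Lemma class_mulr_unit v j j' b : v \is a GRing.unit ->
  R (pt 1 (v * j)) (pt (signz b 1) j') -> R (pt 1 j) (pt (signz b 1) (v^-1 * j')).
Proof.
move=> v_unit; have [k_gt0 k_p kE] := Zp_unit_nat v_unit.
set k := nat_of_ord v in k_gt0 k_p kE.
have kj : pt 1 j *+ k = pt k (v * j) by rewrite pt_mulrn natz -mulr_natr kE mulrC.
rewrite -(class_shift _ _ _ (_ : 0 < k%:Z)) ?ltz_nat // -kj.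
case/(class_mulrn_coprime k_gt0 k_p) => c jc.
rewrite -(ptE c) in jc *; rewrite pt_mulrn => /pt_inj[c1E j'E].
have [c1_pm _] := class_layer jc.
have -> : signz b 1 = c.1 by move: c1E; rewrite -mulr_natr natz; case: b => /=; nia.
by rewrite j'E -mulr_natr kE mulrC mulrK.
Qed.

Lemma class_w_opp u : R (pt 1 1) (pt (-1) u) -> R (pt 1 0) (pt (-1) 0).
Proof.
move=> /classD_closed H.
have [d jd wd] : exists2 d, R (pt 0 1) d & R (pt 1 0) (pt (-1) u - d).
  by apply: H; exists (pt 0 1); rewrite ?ptB ?subr0 ?subrr R_refl.
rewrite (class_torsion jd) ptB subr0 in wd.
by case: (class_nw wd) => [/pt_inj[]|<-].
Qed.

Lemma class_wa_opp : R (pt 1 0) (pt (-1) 0) -> exists u, R (pt 1 1) (pt (-1) u).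
Proof.
move=> /classD_closed H.
have [d jd wd] : exists2 d, R (pt 0 (-1)) d & R (pt 1 1) (pt (-1) 0 - d).
  by apply: H; exists (pt 0 (-1)); rewrite ?ptB ?subr0 ?sub0r ?opprK R_refl.
by exists (- acoord d); rewrite (class_torsion jd) ptB subr0 sub0r in wd.
Qed.

Lemma class_torsion_lift u : R (pt 0 1) (pt 0 u) -> exists b, R (pt 1 1) (pt (signz b 1) u).
Proof.
move=> /classD_closed H.
have [d wd jd] : exists2 d, R (pt (-1) 0) d & R (pt 1 1) (pt 0 u - d).
  by apply: H; exists (pt (-1) 0); rewrite ?ptB ?sub0r ?opprK ?subr0 R_refl.
have [e e_pm dE] := class_pm_w (or_intror erefl) wd.
rewrite dE ptB sub0r subr0 in jd.
by case: e_pm => eE; [exists true | exists false]; rewrite eE ?opprK in jd.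
Qed.

Definition autS : {pred bool * 'Z_p} := [pred bu | R (pt 1 1) (act bu (pt 1 1))].

Lemma autSE b u : ((b, u) \in autS) = R (pt 1 1) (pt (signz b 1) u).
Proof. by rewrite inE act_pt mulr1. Qed.

Lemma autS_unit b u : (b, u) \in autS -> u \is a GRing.unit.
Proof. by rewrite autSE => /class_layer[_ /torsion_unit]. Qed.

Lemma orbit_sub_class_pos n j b u : 0 < n -> (b, u) \in autS ->
  R (pt n j) (pt (signz b n) (u * j)).
Proof.
move=> n_gt0; rewrite autSE (class_shift _ _ _ n_gt0).
have [->|j0] := eqVneq j 0.
  by rewrite mulr0; case: b => [/class_w_opp | _]; rewrite ?R_refl.
have j_unit := Zp_unit_neq0 j0; have jV_unit : j^-1 \is a GRing.unit by rewrite unitrV.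
have -> : pt 1 1 = pt 1 (j^-1 * j) by rewrite mulVr.
by move/(class_mulr_unit jV_unit); rewrite invrK mulrC.
Qed.

Lemma orbit_sub_class_torsion j b u : (b, u) \in autS ->
  R (pt 0 j) (pt (signz b 0) (u * j)).
Proof.
rewrite autSE signz0 => /class_layer[_ Ru].
have [->|j0] := eqVneq j 0; first by rewrite mulr0 R_refl.
by move: (torsion_mulr (Zp_unit_neq0 j0) Ru); rewrite mulr1 mulrC.
Qed.

Lemma orbit_sub_class x bu : bu \in autS -> R x (act bu x).
Proof.
case: bu => b u Ku; wlog x_ge0 : x / 0 <= x.1 => [W|].
  have [/W //|x_lt0] := leP 0 x.1.
  by rewrite -[x]opprK actN; apply/R_opp/W; rewrite (raddfN fst) oppr_ge0 ltW.
rewrite -(ptE x) act_pt /=; move: x_ge0; rewrite le_eqVlt => /orP[/eqP <-|x_gt0].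
  exact: orbit_sub_class_torsion.
exact: orbit_sub_class_pos.
Qed.

Lemma class_sub_orbit_pos n j m j' : 0 < n -> R (pt n j) (pt m j') ->
  exists2 bu, bu \in autS & pt m j' = act bu (pt n j).
Proof.
move=> n_gt0 nm; have [m_pm jj'] := class_layer nm.
have [b mE] : exists b, m = signz b n by case: m_pm => ->; [exists false | exists true].
subst m; rewrite (class_shift _ _ _ n_gt0) in nm.
have [j0|j0] := eqVneq j 0.
  subst j; move: jj'; rewrite pt00 R0 -pt00 => /eqP/pt_inj[_ j'0]; subst j'.
  case: b {m_pm} nm => [/class_wa_opp[u Ku] | _].
    by exists (true, u); rewrite ?autSE // act_pt mulr0.
  by exists (false, 1); rewrite ?autSE ?R_refl // act_pt mulr0.
have j_unit := Zp_unit_neq0 j0.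
exists (b, j^-1 * j'); last by rewrite act_pt /= mulrAC mulVr ?mul1r.
by rewrite autSE; apply: (class_mulr_unit j_unit); rewrite mulr1.
Qed.

Lemma class_sub_orbit_torsion j y : R (pt 0 j) y ->
  exists2 bu, bu \in autS & y = act bu (pt 0 j).
Proof.
move=> jy; have yE := class_torsion jy; rewrite yE in jy *; set j' := acoord y in jy *.
have [j0|j0] := eqVneq j 0.
  subst j; exists (false, 1); rewrite ?autSE ?R_refl // act1.
  by move: jy; rewrite pt00 R0 => /eqP ->.
have j_unit := Zp_unit_neq0 j0; have jV_unit : j^-1 \is a GRing.unit by rewrite unitrV.
have := torsion_mulr jV_unit jy; rewrite mulVr // => /class_torsion_lift[b Ku].
exists (b, j^-1 * j'); first by rewrite autSE.
by rewrite act_pt /= signz0 mulrAC mulVr // mul1r.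
Qed.

Lemma class_sub_orbit x y : R x y -> exists2 bu, bu \in autS & y = act bu x.
Proof.
wlog x_ge0 : x y / 0 <= x.1 => [W xy|].
  have [/W/(_ xy) //|x_lt0] := leP 0 x.1.
  have [||bu Kbu yE] := W (- x) (- y); last by exists bu; rewrite // -[y]opprK yE actN opprK.
    by rewrite (raddfN fst) oppr_ge0 ltW.
  exact: R_opp.
rewrite -(ptE x) -(ptE y); move: x_ge0; rewrite le_eqVlt => /orP[/eqP <-|x_gt0].
  exact: class_sub_orbit_torsion.
exact: class_sub_orbit_pos.
Qed.

Lemma autS1 : (false, 1) \in autS.
Proof. by rewrite inE act1 R_refl. Qed.

Lemma autS_comp bu cv : bu \in autS -> cv \in autS ->
  (bu.1 (+) cv.1, bu.2 * cv.2) \in autS.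
Proof. by rewrite !inE act_comp => Kbu Kcv; apply: R_trans Kcv (orbit_sub_class _ Kbu). Qed.

Lemma autS_inv b u : (b, u) \in autS -> (b, u^-1) \in autS.
Proof.
move=> Ku; have := orbit_sub_class (act (b, u^-1) (pt 1 1)) Ku.
by rewrite -{2}(invrK u) actK ?unitrV ?(autS_unit Ku) // inE R_sym.
Qed.

End CyclicSSubgroup.

End SchurRing.

Theorem corollary3p5 (F : fieldType) (p : nat) (R : rel (grp p)) :
  [pchar F] =i pred0 -> prime p ->
  schur_ring F R ->
  (exists i : int, S_subgroup R (cyc ((1%:Z, i%:~R) : grp p))) ->
  automorphic F R.
Proof.
move=> char0 p_pr SR [i cycS].
have unitS := autS_unit char0 SR p_pr cycS.
apply: (automorphic_of_orbits char0 SR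
  (K := autS R i%:~R) (act := act i%:~R) (t1 := (false, 1))).
- by case=> b u /unitS/act_aut.
- exact: (autS1 SR).
- exact: act1.
- move=> bu cv Kbu Kcv; exists (bu.1 (+) cv.1, bu.2 * cv.2); last exact: act_comp.
  exact: (autS_comp char0 SR p_pr cycS).
- case=> b u Ku; exists (b, u^-1); first exact: (autS_inv char0 SR p_pr cycS).
  exact: actK (unitS _ _ Ku).
- move=> x y; split; first exact: (class_sub_orbit char0 SR p_pr cycS).
  by case=> bu Kbu ->; apply: (orbit_sub_class char0 SR p_pr cycS).
Qed.
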